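(* Consider the online bipartite matching problem with vertex updates on the right side, and let $\alpha>1$ be a real number such that at every time, $|N_H(A)|\ge\alpha|A|$ for every $A\subseteq L$. Then there is an algorithm for this problem with $O(\log_\alpha n)$-amortized recourse, where $n$ is the size of $L$ at the end.
   Context: Online bipartite matching with vertex updates on the right side: there is a bipartite graph $H=(L\uplus R,E_H)$, initially with $L=E_H=\emptyset$, which changes dynamically through three types of updates: (i) a new vertex is added to $L$ together with its incident edges; (ii) a new vertex is added to $R$ together with its incident edges; (iii) a vertex of $R$ is removed. At all times the algorithm must maintain a matching in $H$ covering all of $L$ (it is promised one exists). The algorithm has amortized recourse $\beta$ if the total number of times vertices of $L$ are (re)assigned to a vertex of $R$ is at most $\beta$ times the number of updates. $N_H(A)$ denotes the set of neighbors in $H$ of the vertices in $A$. *)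

From mathcomp Require Import all_boot.
From Stdlib Require Import Reals.

Set Implicit Arguments.
Unset Strict Implicit.
Unset Printing Implicit Defensive.

(* Vertices of L and of R are identified by natural numbers (two separate
   namespaces).  An edge is a pair (v, u) with v in L and u in R. *)

Inductive update : Type :=
| AddL (v : nat) (nbrs : seq nat)
| AddR (u : nat) (nbrs : seq nat)
| DelR (u : nat).

Record graph : Type := Graph {
  Lv : seq nat;
  Rv : seq nat;
  Ev : seq (nat * nat) }.

Definition empty_graph : graph := Graph [::] [::] [::].

Definition apply_update (H : graph) (x : update) : graph :=
  match x with
  | AddL v N => Graph (v :: Lv H) (Rv H) ([seq (v, u) | u <- N] ++ Ev H)
  | AddR u N => Graph (Lv H) (u :: Rv H) ([seq (v, u) | v <- N] ++ Ev H)
  | DelR u => Graph (Lv H) [seq w <- Rv H | w != u]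
                    [seq e <- Ev H | e.2 != u]
  end.

Definition legal_update (H : graph) (x : update) : bool :=
  match x with
  | AddL v N => (v \notin Lv H) && all (fun u => u \in Rv H) N
  | AddR u N => (u \notin Rv H) && all (fun v => v \in Lv H) N
  | DelR u => u \in Rv H
  end.

Definition graph_at (us : seq update) (t : nat) : graph :=
  foldl apply_update empty_graph (take t us).

Definition legal_seq (us : seq update) : Prop :=
  forall t, t < size us -> legal_update (graph_at us t) (nth (DelR 0) us t).

Definition adj (H : graph) (v u : nat) : bool :=
  [&& v \in Lv H, u \in Rv H & (v, u) \in Ev H].

Definition nbhd (H : graph) (A : seq nat) : seq nat :=
  undup [seq u <- Rv H | has (fun v => adj H v u) A].

Definition expanding (alpha : R) (H : graph) : Prop :=
  forall A : seq nat, uniq A -> {subset A <= Lv H} ->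
    (alpha * INR (size A) <= INR (size (nbhd H A)))%R.

(* An assignment of left vertices to right vertices. *)
Definition assignment := nat -> option nat.

Definition covering_matching (H : graph) (M : assignment) : Prop :=
  (forall v, v \in Lv H -> exists2 u, M v = Some u & adj H v u) /\
  (forall v1 v2 u, v1 \in Lv H -> v2 \in Lv H ->
      M v1 = Some u -> M v2 = Some u -> v1 = v2).

(* A deterministic online algorithm: after each prefix of the update sequence
   it outputs the current matching (so the output at time t depends only on
   the first t updates). *)
Definition online_alg := seq update -> assignment.

Definition matching_at (alg : online_alg) (us : seq update) (t : nat) : assignment :=
  alg (take t us).

(* Number of (re)assignments at step t (1 <= t): the vertices of L at time t
   that are new, or whose assigned right vertex changed. *)
Definition reassignments (alg : online_alg) (us : seq update) (t : nat) : nat :=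
  count (fun v => (v \notin Lv (graph_at us t.-1)) ||
                  (matching_at alg us t v != matching_at alg us t.-1 v))
        (Lv (graph_at us t)).

Definition total_recourse (alg : online_alg) (us : seq update) : nat :=
  \sum_(1 <= t < (size us).+1) reassignments alg us t.

From mathcomp Require Import all_boot.
From Stdlib Require Import Reals Lra Classical ClassicalEpsilon ZArith Lia.

Set Implicit Arguments.
Unset Strict Implicit.
Unset Printing Implicit Defensive.

(* After each update at most one vertex v of L is uncovered (the new one, or
   the partner of the deleted right vertex). Grow alternating layers from v:
   layer k+1 contains v and the partners of all right neighbours of layer k.
   As long as no free right vertex is adjacent to layer k, expansion gives
   |layer (k+1)| >= alpha |layer k| + 1, so |layer k| >= alpha^k; since
   |layer k| <= n, a free vertex is reached within floor(log_alpha n) + 1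
   layers, and shifting partners along that alternating path changes at most
   that many assignments. Re-matching greedily in this way after each update
   costs at most 2 + log_alpha n reassignments per update. *)

Definition num_changes (M M' : assignment) (s : seq nat) : nat :=
  count (fun z => M' z != M z) s.

Lemma num_changes_refl M s : num_changes M M s = 0.
Proof. by elim: s => //= z s IH; rewrite eqxx. Qed.

Lemma count_uniq_leq_size (T : eqType) (a : pred T) (s t : seq T) :
  uniq s -> (forall z, z \in s -> a z -> z \in t) -> count a s <= size t.
Proof.
rewrite -size_filter => us sub_t; apply: uniq_leq_size; first exact: filter_uniq.
by move=> z; rewrite mem_filter => /andP[az zs]; exact: sub_t.
Qed.

Definition matching_except (H : graph) (M : assignment) (w : nat) : Prop :=
  (forall y, y \in Lv H -> y != w -> exists2 u, M y = Some u & adj H y u) /\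
  (forall y1 y2 u, y1 \in Lv H -> y2 \in Lv H -> y1 != w -> y2 != w ->
      M y1 = Some u -> M y2 = Some u -> y1 = y2).

Section AlternatingSearch.

Variables (H : graph) (M : assignment) (v0 : nat).
Hypotheses (v0L : v0 \in Lv H) (uniqL : uniq (Lv H)) (Mv0 : matching_except H M v0).

Definition adj_partner (w z : nat) : bool :=
  if M z is Some u then adj H w u else false.

(* [reach k z]: z is joined to v0 by an alternating path using at most k
   matched edges. *)
Fixpoint reach (k z : nat) : bool :=
  if k is k'.+1 then
    reach k' z || [&& z \in Lv H, z != v0 &
                      has (fun w => reach k' w && adj_partner w z) (Lv H)]
  else z == v0.

Lemma reachS k z : reach k z -> reach k.+1 z.
Proof. by move=> h /=; rewrite h. Qed.

Lemma reach_root k : reach k v0.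
Proof. by elim: k => [|k IH] /=; rewrite ?eqxx ?IH. Qed.

(* Moving each partner one step towards v0 along the path covers v0 and
   uncovers w, without using any right vertex that M did not use. *)
Lemma shift_along_path k w : reach k w -> exists M' P, [/\
  matching_except H M' w, size P <= k, (forall y, y \in P -> reach k y),
  (forall y, y \in Lv H -> y \notin P -> y != w -> M' y = M y) &
  (forall y u, y \in Lv H -> y != w -> M' y = Some u ->
     exists y', [/\ y' \in Lv H, y' != v0 & M y' = Some u])].
Proof.
elim: k w => [|k IH] w /=.
  move=> /eqP ->; exists M, [::]; split => //.
  by move=> y u yL yv e; exists y.
case rw: (reach k w) => /=.
  have [M' [P [hM' sP rP eqP' imP]]] := IH w rw.
  by exists M', P; split => //; [exact: leqW | move=> y /rP /reachS].
move=> /and3P[wL wv0 /hasP[w0 w0L /andP[rw0]]].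
rewrite /adj_partner; case Mw: (M w) => [u|] // aw0u.
have [M' [P [[covM' injM'] sP rP eqP' imP]]] := IH w0 rw0.
have wP : w \notin P by apply/negP => /rP; rewrite rw.
have ww0 : w != w0 by apply/negP => /eqP e; rewrite e rw0 in rw.
have M'w : M' w = Some u by rewrite eqP'.
exists (fun y => if y == w0 then Some u else if y == w then None else M' y),
       (w0 :: P).
split.
- split.
  + move=> y yL yw; case: eqP => [->|/eqP yw0]; first by exists u.
    by rewrite (negbTE yw); apply: covM'.
  + move=> y1 y2 u' y1L y2L y1w y2w.
    case: (eqVneq y1 w0) => [->|n1]; case: (eqVneq y2 w0) => [->|n2] //;
      rewrite ?(negbTE y1w) ?(negbTE y2w).
    * move=> [<-] e2; have e := injM' _ _ _ y2L wL n2 ww0 e2 M'w.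
      by rewrite e eqxx in y2w.
    * move=> e1 [e2]; rewrite -e2 in e1.
      have e := injM' _ _ _ y1L wL n1 ww0 e1 M'w.
      by rewrite e eqxx in y1w.
    * exact: injM'.
- by [].
- by move=> y; rewrite inE => /orP[/eqP ->|/rP]; exact: reachS.
- move=> y yL; rewrite inE negb_or => /andP[yw0 yP] yw.
  by rewrite (negbTE yw0) (negbTE yw); apply: eqP'.
- move=> y u' yL yw; case: eqP => [_ [<-]|/eqP yw0]; first by exists w.
  by rewrite (negbTE yw); exact: imP.
Qed.

Lemma augment_to_free k w u : reach k w -> adj H w u ->
  (forall y, y \in Lv H -> y != v0 -> M y != Some u) ->
  exists M', covering_matching H M' /\ num_changes M M' (Lv H) <= k.+1.
Proof.
move=> rw awu u_free.
have [M' [P [[covM' injM'] sP _ eqP' imP]]] := shift_along_path rw.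
have M'_avoids_u y : y \in Lv H -> y != w -> M' y = Some u -> False.
  move=> yL yw e; have [y' [y'L y'v0 e']] := imP _ _ yL yw e.
  by move: (u_free _ y'L y'v0); rewrite e' eqxx.
exists (fun y => if y == w then Some u else M' y); split; first split.
- move=> y yL; case: eqP => [->|/eqP yw]; first by exists u.
  exact: covM'.
- move=> y1 y2 u' y1L y2L.
  case: (eqVneq y1 w) => [->|n1]; case: (eqVneq y2 w) => [->|n2] //.
  + by move=> [<-] e2; case: (M'_avoids_u _ y2L n2 e2).
  + by move=> e1 [e2]; rewrite -e2 in e1; case: (M'_avoids_u _ y1L n1 e1).
  + exact: injM'.
- apply: (@leq_trans (size (w :: P))); last by rewrite /= ltnS.
  apply: count_uniq_leq_size => // z zL /=.
  case: (eqVneq z w) => [-> _|zw]; first by rewrite inE eqxx.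
  rewrite inE; case zP: (z \in P); first by rewrite orbT.
  by rewrite eqP' ?zP // eqxx.
Qed.

Definition layer k := [seq z <- Lv H | reach k z].

Definition partner_of (u : nat) : nat :=
  nth 0 (Lv H) (find (fun y => (y != v0) && (M y == Some u)) (Lv H)).

(* v0 and the partners of the neighbours of layer k are distinct members of
   layer k.+1. *)
Lemma layer_growth k :
  (forall w u, reach k w -> adj H w u ->
     exists2 y, y \in Lv H & (y != v0) && (M y == Some u)) ->
  (size (nbhd H (layer k))).+1 <= size (layer k.+1).
Proof.
move=> all_matched; set N := nbhd H (layer k).
have partnerP u : u \in N -> [/\ partner_of u \in Lv H, partner_of u != v0,
    M (partner_of u) = Some u & exists2 w, w \in Lv H & reach k w && adj H w u].
  rewrite /N /nbhd mem_undup mem_filter => /andP[/hasP[w wS awu] _].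
  move: wS; rewrite mem_filter => /andP[rw wL].
  have has_partner : has (fun y => (y != v0) && (M y == Some u)) (Lv H).
    by apply/hasP; have [y yL yP] := all_matched w u rw awu; exists y.
  have /andP[pv0 /eqP pM] := nth_find 0 has_partner.
  split => //; last by exists w => //; rewrite rw.
  by rewrite /partner_of mem_nth // -has_find.
have -> : (size N).+1 = size (v0 :: map partner_of N) by rewrite /= size_map.
apply: uniq_leq_size.
- rewrite /= map_inj_in_uniq ?undup_uniq; last first.
    move=> u1 u2 /partnerP[_ _ M1 _] /partnerP[_ _ M2 _] e.
    by rewrite e M2 in M1; case: M1.
  rewrite andbT; apply/mapP => [[u /partnerP[_ pv0 _ _] e]].
  by rewrite -e eqxx in pv0.
- move=> z; rewrite inE mem_filter => /orP[/eqP->|/mapP[u uN ->]].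
    by rewrite reach_root v0L.
  have [pL pv0 pM [w wL /andP[rw awu]]] := partnerP u uN.
  rewrite pL andbT /= pL pv0 /=; apply/orP; right; apply/hasP; exists w => //.
  by rewrite rw /adj_partner pM.
Qed.

Definition free_reachable k := exists w u, [/\ reach k w, adj H w u &
  forall y, y \in Lv H -> y != v0 -> M y != Some u].

Variable alpha : R.
Hypotheses (alpha_gt1 : (1 < alpha)%R) (expandingH : expanding alpha H).

Lemma layer_size_ge_pow k : (forall k', k' < k -> ~ free_reachable k') ->
  (alpha ^ k <= INR (size (layer k)))%R.
Proof.
elim: k => [|k IH] no_free /=.
  have : v0 \in layer 0 by rewrite mem_filter /= eqxx v0L.
  by case: (layer 0) => // ? s _; apply: (le_INR 1); apply/leP.
have IHk := IH (fun k' lt => no_free k' (leqW lt)).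
have all_matched w u : reach k w -> adj H w u ->
     exists2 y, y \in Lv H & (y != v0) && (M y == Some u).
  move=> rw awu; apply: NNPP => none; apply: (no_free k) => //.
  exists w, u; split => // y yL yv0; apply/eqP => e; apply: none.
  by apply: (ex_intro2 _ _ y yL); rewrite yv0 e eqxx.
have grow : (INR (size (nbhd H (layer k))) + 1 <= INR (size (layer k.+1)))%R.
  by rewrite -S_INR; apply/le_INR/leP/layer_growth.
have expand : (alpha * INR (size (layer k)) <= INR (size (nbhd H (layer k))))%R.
  apply: expandingH; first exact: filter_uniq.
  by move=> z; rewrite mem_filter => /andP[].
have : (alpha * alpha ^ k <= alpha * INR (size (layer k)))%R.
  by apply: Rmult_le_compat_l; lra.
lra.
Qed.

Lemma augment_within K : (INR (size (Lv H)) < alpha ^ K)%R ->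
  exists M', covering_matching H M' /\ num_changes M M' (Lv H) <= K.
Proof.
move=> small.
case: (classic (exists2 k, k < K & free_reachable k)) => [[k ltkK [w [u [rw awu u_free]]]]|no_free].
  have [M' [covM' ch]] := augment_to_free rw awu u_free.
  by exists M'; split => //; exact: leq_trans ch ltkK.
have big := layer_size_ge_pow (fun k lt f => no_free (ex_intro2 _ _ k lt f)).
have : (INR (size (layer K)) <= INR (size (Lv H)))%R.
  by apply/le_INR/leP; rewrite size_filter count_size.
lra.
Qed.

End AlternatingSearch.

Lemma ln_le x y : (0 < x)%R -> (x <= y)%R -> (ln x <= ln y)%R.
Proof.
move=> x0 [xy|->]; last exact: Rle_refl.
by left; apply: ln_increasing.
Qed.

(* [ln] is 0 outside (0, +oo). *)
Lemma ln_0 : ln 0 = 0%R.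
Proof. by rewrite /ln; case: Rlt_dec => // h; exfalso; lra. Qed.

Lemma ln_INR_ge0 n : (0 <= ln (INR n))%R.
Proof.
case: n => [|n]; first by rewrite -[INR 0]/0%R ln_0; exact: Rle_refl.
rewrite -ln_1; apply: ln_le; first lra.
by rewrite S_INR; have := pos_INR n; lra.
Qed.

Lemma ln_INR_le n m : n <= m -> (ln (INR n) <= ln (INR m))%R.
Proof.
case: n => [|n] le_nm.
  by rewrite -[INR 0]/0%R ln_0; exact: ln_INR_ge0.
by apply: ln_le; [apply/lt_0_INR/ltP | apply/le_INR/leP].
Qed.

Definition logb (alpha : R) (n : nat) : R := ln (INR n) / ln alpha.

(* The number of alternating layers that must contain a free right vertex:
   floor (log_alpha n) + 1. *)
Definition search_depth (alpha : R) (n : nat) : nat :=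
  Z.to_nat (Zfloor (logb alpha n) + 1).

Section SearchDepth.

Variable alpha : R.
Hypothesis alpha_gt1 : (1 < alpha)%R.

Lemma ln_alpha_gt0 : (0 < ln alpha)%R.
Proof. by rewrite -ln_1; apply: ln_increasing; lra. Qed.

Lemma logb_ge0 n : (0 <= logb alpha n)%R.
Proof.
apply: Rmult_le_pos; first exact: ln_INR_ge0.
by left; apply: Rinv_0_lt_compat; exact: ln_alpha_gt0.
Qed.

Lemma INR_search_depth n :
  INR (search_depth alpha n) = (IZR (Zfloor (logb alpha n)) + 1)%R.
Proof.
have floor_ge0 := Zfloor_lub 0 _ (logb_ge0 n).
by rewrite /search_depth INR_IZR_INZ Z2Nat.id ?plus_IZR //; lia.
Qed.

Lemma search_depth_le n : (INR (search_depth alpha n) <= logb alpha n + 1)%R.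
Proof. by rewrite INR_search_depth; have [] := Zfloor_bound (logb alpha n); lra. Qed.

Lemma search_depth_mono n m : n <= m -> search_depth alpha n <= search_depth alpha m.
Proof.
move=> le_nm; have floor_ge0 := Zfloor_lub 0 _ (logb_ge0 n).
have : (logb alpha n <= logb alpha m)%R.
  apply: Rmult_le_compat_r; last exact: ln_INR_le.
  by left; apply: Rinv_0_lt_compat; exact: ln_alpha_gt0.
move=> /Zfloor_le le_floor; apply/leP; rewrite /search_depth; lia.
Qed.

Lemma pow_search_depth_gt n : 0 < n -> (INR n < alpha ^ search_depth alpha n)%R.
Proof.
move=> n_gt0; have n_pos : (0 < INR n)%R by apply/lt_0_INR/ltP.
have lna := ln_alpha_gt0.
apply: ln_lt_inv => //; first by apply: pow_lt; lra.
rewrite ln_pow; last lra.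
rewrite INR_search_depth; have [_ floor_gt] := Zfloor_bound (logb alpha n).
have -> : ln (INR n) = (logb alpha n * ln alpha)%R by rewrite /logb; field; lra.
by apply: Rmult_lt_compat_r.
Qed.

End SearchDepth.

Definition bounded_rematch (alpha : R) (H : graph) (M M' : assignment) : Prop :=
  covering_matching H M' /\
  num_changes M M' (Lv H) <= search_depth alpha (size (Lv H)).

Lemma bounded_rematch_refl alpha H M :
  covering_matching H M -> bounded_rematch alpha H M M.
Proof. by rewrite /bounded_rematch num_changes_refl. Qed.

Lemma exists_bounded_rematch alpha H M w : (1 < alpha)%R -> uniq (Lv H) ->
  w \in Lv H -> matching_except H M w -> expanding alpha H ->
  exists M', bounded_rematch alpha H M M'.
Proof.
move=> alpha_gt1 uniqL wL Mw expandingH.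
apply: (augment_within wL uniqL Mw alpha_gt1 expandingH).
by apply: pow_search_depth_gt => //; move: wL; case: (Lv H).
Qed.

Lemma adj_apply_update H x y u : adj H y u ->
  (if x is DelR w then u != w else true) -> adj (apply_update H x) y u.
Proof.
rewrite /adj => /and3P[yL uR yuE]; case: x => [v N|w N|w] /= uw.
- by rewrite inE yL uR mem_cat yuE !orbT.
- by rewrite inE yL uR mem_cat yuE !orbT.
- by rewrite yL !mem_filter uR yuE uw.
Qed.

Lemma exists_bounded_rematch_update alpha H M x : (1 < alpha)%R ->
  legal_update H x -> uniq (Lv H) -> covering_matching H M ->
  expanding alpha (apply_update H x) ->
  exists M', bounded_rematch alpha (apply_update H x) M M'.
Proof.
move=> alpha_gt1 legal uniqL [covM injM].
case: x legal => [v N|u N|u] legal expandingH'.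
- have vL : v \notin Lv H by case/andP: legal.
  apply: (@exists_bounded_rematch _ _ _ v) => //=; rewrite ?vL ?inE ?eqxx //.
  split=> [y|y1 y2 u]; rewrite /= !inE.
  + case/orP=> [/eqP->|yL]; first by rewrite eqxx.
    move=> _; have [u Mu yu] := covM y yL.
    by exists u => //; exact: (adj_apply_update (x := AddL v N) yu).
  + by case/orP=> [/eqP->|y1L]; rewrite ?eqxx // => /orP[/eqP->|y2L];
       rewrite ?eqxx // => _ _; exact: injM.
- exists M; apply: bounded_rematch_refl; split => // y yL.
  have [w Mw yw] := covM y yL.
  by exists w => //; exact: (adj_apply_update (x := AddR u N) yw).
- case: (boolP (has (fun w => M w == Some u) (Lv H))) => [matched|unmatched].
    have [w wL /eqP Mw] := hasP matched.
    apply: (@exists_bounded_rematch _ _ _ w) => //.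
    split=> [y yL yw|y1 y2 u' y1L y2L _ _]; last exact: injM.
    have [u' Mu' yu'] := covM y yL; exists u' => //.
    apply: (adj_apply_update (x := DelR u) yu'); apply: contra yw => /eqP u'u.
    by rewrite u'u in Mu'; rewrite (injM _ _ _ yL wL Mu' Mw) eqxx.
  exists M; apply: bounded_rematch_refl; split => // y yL.
  have [u' Mu' yu'] := covM y yL; exists u' => //.
  apply: (adj_apply_update (x := DelR u) yu'); apply: contraNneq unmatched => u'u.
  by apply/hasP; exists y; rewrite // Mu' u'u.
Qed.

(* Hilbert's choice returns the old matching when no bounded re-matching
   exists; under the hypotheses of the theorem this never happens. *)
Definition rematch (alpha : R) (H : graph) (M : assignment) : assignment :=
  epsilon (inhabits M) (bounded_rematch alpha H M).

Definition rematch_step (alpha : R) (HM : graph * assignment) (x : update)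
    : graph * assignment :=
  let H' := apply_update HM.1 x in (H', rematch alpha H' HM.2).

Definition rematch_alg (alpha : R) : online_alg :=
  fun p => (foldl (rematch_step alpha) (empty_graph, fun _ => None) p).2.

Lemma foldl_rematch_step_graph alpha HM p :
  (foldl (rematch_step alpha) HM p).1 = foldl apply_update HM.1 p.
Proof. by elim: p HM => //= x p IH HM; rewrite IH. Qed.

Lemma graph_at_succ us t : t < size us ->
  graph_at us t.+1 = apply_update (graph_at us t) (nth (DelR 0) us t).
Proof. by move=> lt; rewrite /graph_at (take_nth (DelR 0)) // foldl_rcons. Qed.

Lemma matching_at_succ alpha us t : t < size us ->
  matching_at (rematch_alg alpha) us t.+1 =
  rematch alpha (graph_at us t.+1) (matching_at (rematch_alg alpha) us t).
Proof.
move=> lt; rewrite graph_at_succ // /matching_at /rematch_alg.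
by rewrite (take_nth (DelR 0)) // foldl_rcons /= foldl_rematch_step_graph.
Qed.

Lemma size_Lv_apply_update H x : size (Lv H) <= size (Lv (apply_update H x)).
Proof. by case: x. Qed.

Lemma size_Lv_graph_at_mono us t t' : t <= t' ->
  size (Lv (graph_at us t)) <= size (Lv (graph_at us t')).
Proof.
elim: t' => [|t' IH]; first by rewrite leqn0 => /eqP->.
rewrite leq_eqVlt => /orP[/eqP->//|/IH le_t]; apply: leq_trans le_t _.
case: (ltnP t' (size us)) => [lt|ge]; first by rewrite graph_at_succ // size_Lv_apply_update.
by rewrite /graph_at !take_oversize // ltnW.
Qed.

Lemma count_new_vertices H x :
  count (fun z => z \notin Lv H) (Lv (apply_update H x)) <= 1.
Proof.
have old_count0 : count (fun z => z \notin Lv H) (Lv H) = 0.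
  by apply/eqP; rewrite -leqn0 leqNgt -has_count; apply/hasPn => z ->.
by case: x => [v N|u N|u] //=; rewrite old_count0 ?addn0 ?leq_b1.
Qed.

Section RematchRun.

Variables (alpha : R) (us : seq update).
Hypotheses (alpha_gt1 : (1 < alpha)%R) (legal : legal_seq us)
  (expanding_us : forall t, t <= size us -> expanding alpha (graph_at us t)).

Let Mat := matching_at (rematch_alg alpha) us.

Lemma uniq_Lv_graph_at t : t <= size us -> uniq (Lv (graph_at us t)).
Proof.
elim: t => [|t IH] lt; first by rewrite /graph_at take0.
have := legal lt; rewrite graph_at_succ //.
case: (nth (DelR 0) us t) => [v N /andP[vL _]|u N _|u _] /=;
  by rewrite ?vL IH // ltnW.
Qed.

Lemma bounded_rematch_at t : t < size us ->
  covering_matching (graph_at us t) (Mat t) ->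
  bounded_rematch alpha (graph_at us t.+1) (Mat t) (Mat t.+1).
Proof.
move=> lt covt; rewrite /Mat matching_at_succ //; apply: epsilon_spec.
rewrite graph_at_succ //; apply: exists_bounded_rematch_update => //.
- exact: legal.
- exact: uniq_Lv_graph_at (ltnW lt).
- by rewrite -graph_at_succ //; exact: expanding_us.
Qed.

Lemma covering_matching_at t : t <= size us ->
  covering_matching (graph_at us t) (Mat t).
Proof.
elim: t => [|t IH] lt; first by rewrite /graph_at take0.
by have [] := bounded_rematch_at lt (IH (ltnW lt)).
Qed.

Let N := size (Lv (graph_at us (size us))).

Lemma reassignments_le t : t < size us ->
  reassignments (rematch_alg alpha) us t.+1 <= (search_depth alpha N).+1.
Proof.
move=> lt; rewrite /reassignments /=; set s := Lv (graph_at us t.+1).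
apply: (@leq_trans (count (fun z => z \notin Lv (graph_at us t)) s +
                    num_changes (Mat t) (Mat t.+1) s)).
  by rewrite /num_changes -count_predUI; exact: leq_addr.
rewrite -[(search_depth _ _).+1]add1n; apply: leq_add.
  by rewrite /s graph_at_succ //; exact: count_new_vertices.
have [_ changes_le] := bounded_rematch_at lt (covering_matching_at (ltnW lt)).
apply: leq_trans changes_le _; apply: search_depth_mono => //.
exact: size_Lv_graph_at_mono.
Qed.

Lemma total_recourse_le :
  total_recourse (rematch_alg alpha) us <= size us * (search_depth alpha N).+1.
Proof.
rewrite /total_recourse -[X in X * _]/((size us).+1.-1) -subn1 -sum_nat_const_nat.
rewrite big_nat_cond [X in _ <= X]big_nat_cond; apply: leq_sum => t /andP[/andP[]].
by case: t => // t _ lt _; exact: reassignments_le.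
Qed.

End RematchRun.

Lemma recourse_bound_real alpha n m : (1 < alpha)%R ->
  (INR (m * (search_depth alpha n).+1) <= 2 * (1 + logb alpha n) * INR m)%R.
Proof.
move=> alpha_gt1; rewrite mult_INR S_INR.
have := search_depth_le alpha_gt1 n; have := logb_ge0 alpha_gt1 n.
have := pos_INR m; nra.
Qed.

Theorem theorem6 :
  exists C : R, (0 < C)%R /\
  forall alpha : R, (1 < alpha)%R ->
  exists alg : online_alg,
  forall us : seq update,
    legal_seq us ->
    (forall t, t <= size us -> expanding alpha (graph_at us t)) ->
    (forall t, t <= size us -> covering_matching (graph_at us t) (matching_at alg us t)) /\
    (INR (total_recourse alg us) <=
       C * (1 + ln (INR (size (Lv (graph_at us (size us))))) / ln alpha) * INR (size us))%R.
Proof.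
exists 2%R; split; first lra.
move=> alpha alpha_gt1; exists (rematch_alg alpha) => us legal expanding_us; split.
  by move=> t; exact: covering_matching_at.
apply: Rle_trans (recourse_bound_real _ _ alpha_gt1).
by apply/le_INR/leP; exact: total_recourse_le.
Qed.
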